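(* Let $f:\mathfrak g\to\mathfrak g$ be Ad-covariant ($f(gXg^{-1})=gf(X)g^{-1}$). Let $T(t)\in\mathbf T_{m+1}$ be a smooth curve with $1-\alpha b_k\neq0$, put $\mathcal F_-=I+\alpha\mathcal E$, $\mathcal L=\mathcal F_--\alpha T$, $\mathcal T_1=\mathcal L\mathcal F_-^{-1}$, $\mathcal T_2=\mathcal F_-^{-1}\mathcal L$, $\mathcal A_1=\mathcal F_-\,\pi_-\big(\mathcal F_-^{-1}f(\mathcal T_1)\big)$, $\mathcal A_2=\pi_-\big(f(\mathcal T_2)\mathcal F_-^{-1}\big)\mathcal F_-$, and suppose $\dot{\mathcal T}_1=[\mathcal A_1,\mathcal T_1]$. Write $P_0(\mathcal A_1)=\mathrm{diag}(\mathbf a_1,\dots,\mathbf a_N)$, $P_0(\mathcal A_2)=\mathrm{diag}(\mathbf a'_1,\dots,\mathbf a'_N)$. Then $\mathbf a'_k=\mathbf a_{k+1}$ and there is $C$ independent of $k$ such that $\mathbf a_k=C+\sum_{j=1}^{k-1}\frac{\alpha\dot b_j}{1-\alpha b_j}$, $\mathbf a'_k=C+\sum_{j=1}^{k}\frac{\alpha\dot b_j}{1-\alpha b_j}$.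
   Context: Periodic lattice setting: $N\ge2$, $m\ge1$; $\mathfrak g=\{X(\lambda)\in gl(N)[\lambda,\lambda^{-1}]:\Omega X(\lambda)\Omega^{-1}=X(\omega\lambda)\}$, $\omega=e^{2\pi i/N}$, $\Omega=\mathrm{diag}(1,\omega,\dots,\omega^{N-1})$, matrix indices and subscripts modulo $N$; $\mathfrak g_p=\{\lambda^p\sum_{j-k\equiv p}x_{jk}E_{jk}\}$, $P_0$ projection onto $\mathfrak g_0$, $\pi_-$ projection onto $\oplus_{p<0}\mathfrak g_p$, $\pi_+$ onto $\oplus_{p\ge0}\mathfrak g_p$. $\alpha\ne0$ real; $\mathcal E=\lambda\sum_kE_{k+1,k}$; $\mathcal F_-^{-1}$ a formal power series in $\lambda$ (algebra tacitly completed). $\mathbf T_{m+1}$ = set of $T=\mathcal E+\sum_kb_kE_{kk}+\sum_{j=1}^m\lambda^{-j}\sum_ka_k^{(j)}E_{k,k+j}$. *)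

From mathcomp Require Import all_boot all_order all_algebra.
From mathcomp Require Import complex.
From mathcomp Require Import all_classical all_reals all_analysis.
Set Implicit Arguments. Unset Strict Implicit. Unset Printing Implicit Defensive.
Import Order.TTheory GRing.Theory Num.Theory.
Local Open Scope ring_scope.

Definition reC (R : realType) (z : R[i]) : R := let: Complex x _ := z in x.
Definition imC (R : realType) (z : R[i]) : R := let: Complex _ y := z in y.

Definition smoothR (R : realType) (g : R -> R) : Prop :=
  forall (n : nat) (t : R), derivable (iter n (fun h => derive1 h) g) t 1.

Definition smoothC (R : realType) (u : R -> R[i]) : Prop :=
  smoothR (fun s => reC (u s)) /\ smoothR (fun s => imC (u s)).

Definition cderiv (R : realType) (u : R -> R[i]) (t : R) : R[i] :=
  Complex (derive1 (fun s => reC (u s)) t) (derive1 (fun s => imC (u s)) t).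

(* Formal Laurent series in lambda with N x N complex matrix coefficients:  *)
(* X p = coefficient of lambda^p.                                            *)
Definition loop (R : realType) (N : nat) := int -> 'M[R[i]]_N.

(* twisting condition Omega X(lambda) Omega^-1 = X(omega lambda):           *)
Definition twisted (R : realType) (N : nat) (X : loop R N) : Prop :=
  forall (p : int) (i j : 'I_N), X p i j != 0 ->
    (N%:Z %| (i%:Z - j%:Z - p))%Z.

Definition bounded_below (R : realType) (N : nat) (X : loop R N) : Prop :=
  exists b : int, forall p : int, (p < b)%R -> X p = 0.

(* the completed algebra \hat g (formal power series in lambda allowed) *)
Definition inG (R : realType) (N : nat) (X : loop R N) : Prop :=
  twisted X /\ bounded_below X.

Definition lo (R : realType) (N : nat) (X : loop R N) : int :=
  xget 0%R [set b : int | forall p : int, (p < b)%R -> X p = 0].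

(* Cauchy product (correct whenever X and Y are bounded below) *)
Definition mulL (R : realType) (N : nat) (X Y : loop R N) : loop R N :=
  fun p => if (lo X + lo Y <= p)%R then
      \sum_(i < absz (p - lo X - lo Y + 1))
         (X (lo X + i%:Z) *m Y (p - lo X - i%:Z))
    else 0.

Definition addL (R : realType) (N : nat) (X Y : loop R N) : loop R N :=
  fun p => X p + Y p.
Definition subL (R : realType) (N : nat) (X Y : loop R N) : loop R N :=
  fun p => X p - Y p.
Definition scaleL (R : realType) (N : nat) (c : R[i]) (X : loop R N) : loop R N :=
  fun p => c *: X p.
Definition oneL (R : realType) (N : nat) : loop R N :=
  fun p => if p == 0 then 1%:M else 0.
Definition commL (R : realType) (N : nat) (X Y : loop R N) : loop R N :=
  subL (mulL X Y) (mulL Y X).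

Definition pim (R : realType) (N : nat) (X : loop R N) : loop R N :=
  fun p => if (p < 0)%R then X p else 0.

(* P_0 : degree-zero part (a diagonal matrix for twisted X) *)
Definition P0 (R : realType) (N : nat) (X : loop R N) : 'M[R[i]]_N := X 0.

Definition shiftM (R : realType) (N : nat) : 'M[R[i]]_N :=
  \matrix_(i < N, j < N) (if (i : nat) == (j.+1 %% N)%N then 1 else 0).

Definition calE (R : realType) (N : nat) : loop R N :=
  fun p => if p == 1 then shiftM R N else 0.

Definition Fminus (R : realType) (N : nat) (alpha : R) : loop R N :=
  addL (oneL R N) (scaleL (alpha%:C)%C (calE R N)).

(* T = calE + sum_k b_k E_kk + sum_{j=1}^m lambda^-j sum_k a^(j)_k E_{k,k+j}, *)
(* at time t; a j k t stands for a^(j)_k(t) (only 1 <= j <= m is used).     *)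
Definition Tcurve (R : realType) (N m : nat) (b : 'I_N -> R -> R[i])
    (a : nat -> 'I_N -> R -> R[i]) (t : R) : loop R N :=
  fun p =>
    if p == 1 then shiftM R N
    else if p == 0 then \matrix_(i < N, j < N) (if i == j then b i t else 0)
    else if ((- (m%:Z) <= p)%R && (p < 0)%R) then
      \matrix_(i < N, j < N)
        (if (j : nat) == ((i + absz p) %% N)%N then a (absz p) i t else 0)
    else 0.

Definition dotL (R : realType) (N : nat) (X : R -> loop R N) (t : R) : loop R N :=
  fun p => \matrix_(i < N, j < N) cderiv (fun s => X s p i j) t.

From mathcomp Require Import all_boot all_order all_algebra.
From mathcomp Require Import complex.
From mathcomp Require Import all_classical all_reals all_analysis.
From mathcomp Require Import zify ring.
Import Order.TTheory GRing.Theory Num.Theory.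
Set Implicit Arguments. Unset Strict Implicit. Unset Printing Implicit Defensive.
Local Open Scope ring_scope.

(* Put Y := pi_-(F_-^{-1} f(T_1)).  Then A_1 = F_- Y, and since T_2 = F_-^{-1} T_1 F_-,
   Ad-covariance of f gives A_2 = Y F_- as well.  As F_- = I + alpha E only has degrees 0
   and 1 while Y has only negative degrees, P_0(A_1) = alpha E_0 Y_{-1} and
   P_0(A_2) = alpha Y_{-1} E_0 with E_0 the cyclic shift, whose diagonals are cyclic shifts
   of each other: a'_k = a_{k+1}.  Multiplying the Lax equation on the right by F_- gives
   dL/dt = A_1 L - L A_2 for L = F_- - alpha T; all three factors vanish in positive
   degree and L_0 = diag(1 - alpha b_k), so the diagonal of the degree-0 part reads
   -alpha db_k/dt = (a_k - a'_k)(1 - alpha b_k).  The two relations telescope around the cycle. *)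

Section WindowSums.

Variables (V : zmodType) (g : int -> V).

Lemma sum_window_pad (l : int) (M d e : nat) :
  (forall s, (s < l) || (l + M%:Z <= s) -> g s = 0) ->
  \sum_(i < d + M + e) g (l - d%:Z + i%:Z) = \sum_(i < M) g (l + i%:Z).
Proof.
move=> g0; rewrite !big_split_ord /= big1 ?add0r => [|i _]; last first.
  by apply: g0; have := ltn_ord i; lia.
rewrite [X in _ + X]big1 ?addr0 => [|i _]; last by apply: g0; lia.
by apply: eq_bigr => i _; congr g; lia.
Qed.

Lemma sum_window_eq (l1 l2 : int) (M1 M2 : nat) :
  (forall s, (s < l1) || (l1 + M1%:Z <= s) -> g s = 0) ->
  (forall s, (s < l2) || (l2 + M2%:Z <= s) -> g s = 0) ->
  \sum_(i < M1) g (l1 + i%:Z) = \sum_(i < M2) g (l2 + i%:Z).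
Proof.
move=> g1 g2; pose L := Num.min l1 l2; pose U := Num.max (l1 + M1%:Z) (l2 + M2%:Z).
have [L1 L2] : L <= l1 /\ L <= l2 by rewrite !ge_min !lexx orbT.
have [U1 U2] : l1 + M1%:Z <= U /\ l2 + M2%:Z <= U by rewrite !le_max !lexx orbT.
clearbody L U.
rewrite -(sum_window_pad (absz (l1 - L)%R) (absz (U - l1 - M1%:Z)%R) g1).
rewrite -(sum_window_pad (absz (l2 - L)%R) (absz (U - l2 - M2%:Z)%R) g2).
have -> : (absz (l1 - L)%R + M1 + absz (U - l1 - M1%:Z)%R)%N = absz (U - L)%R by lia.
have -> : (absz (l2 - L)%R + M2 + absz (U - l2 - M2%:Z)%R)%N = absz (U - L)%R by lia.
by apply: eq_bigr => i _; congr g; lia.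
Qed.

End WindowSums.

Section LoopAlgebra.

Variables (R : realType) (N : nat).
Implicit Types (X Y Z F P L : loop R N).

Lemma bounded_below_lo X : bounded_below X -> forall p, p < lo X -> X p = 0.
Proof. exact: (@xgetPex _ 0 [set b : int | forall p, p < b -> X p = 0]). Qed.

Lemma bounded_below_mulL X Y : bounded_below (mulL X Y).
Proof. by exists (lo X + lo Y) => p; rewrite /mulL ltNge => /negbTE ->. Qed.

Local Hint Resolve bounded_below_mulL : core.

Lemma mulL_below X Y p : p < lo X + lo Y -> mulL X Y p = 0.
Proof. by rewrite /mulL ltNge => /negbTE ->. Qed.

Lemma mulL_window X Y (r l : int) (M : nat) :
  bounded_below X -> bounded_below Y ->
  (forall s, (s < l) || (l + M%:Z <= s) -> X s *m Y (r - s) = 0) ->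
  mulL X Y r = \sum_(i < M) X (l + i%:Z) *m Y (r - (l + i%:Z)).
Proof.
move=> /bounded_below_lo X0 /bounded_below_lo Y0 XY0; rewrite /mulL.
case: ifPn => [_|]; last first.
  rewrite -ltNge => lt_r; rewrite big1 // => i _.
  have [lt_i|ge_i] := ltP (l + i%:Z) (lo X); first by rewrite X0 ?mul0mx.
  by rewrite Y0 ?mulmx0 //; lia.
rewrite (eq_bigr (fun i : 'I__ => (fun s => X s *m Y (r - s)) (lo X + i%:Z))) => [|i _]; last first.
  by rewrite /= opprD addrA.
apply: (sum_window_eq (g := fun s => X s *m Y (r - s))) => // s /orP[lt_s|ge_s].
  by rewrite X0 ?mul0mx.
by rewrite Y0 ?mulmx0 //; lia.
Qed.

Lemma mulLA X Y Z :
  bounded_below X -> bounded_below Y -> bounded_below Z ->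
  mulL (mulL X Y) Z = mulL X (mulL Y Z).
Proof.
move=> bX bY bZ; apply/funext => p.
have [X0 Y0 Z0] := And3 (bounded_below_lo bX) (bounded_below_lo bY) (bounded_below_lo bZ).
set lx := lo X; set ly := lo Y; set lz := lo Z.
set M := (absz (p - lx - ly - lz)%R + 1)%N.
have ltM : p - lx - ly - lz < M%:Z by rewrite /M; lia.
rewrite (@mulL_window _ _ p (lx + ly) M (bounded_below_mulL X Y) bZ); last first.
  move=> s /orP[lt_s|ge_s]; first by rewrite mulL_below ?mul0mx.
  by rewrite Z0 ?mulmx0 //; lia.
rewrite (@mulL_window _ _ p lx M bX (bounded_below_mulL Y Z)); last first.
  move=> s /orP[lt_s|ge_s]; first by rewrite X0 ?mul0mx.
  by rewrite mulL_below ?mulmx0 //; lia.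
under eq_bigr => i _.
  rewrite (@mulL_window X Y _ lx M bX bY); last first.
    move=> s /orP[lt_s|ge_s]; first by rewrite X0 ?mul0mx.
    by rewrite Y0 ?mulmx0 //; have := ltn_ord i; lia.
  rewrite mulmx_suml.
over.
under [RHS]eq_bigr => j _.
  rewrite (@mulL_window Y Z _ ly M bY bZ); last first.
    move=> s /orP[lt_s|ge_s]; first by rewrite Y0 ?mul0mx.
    by rewrite Z0 ?mulmx0 //; have := ltn_ord j; lia.
  rewrite mulmx_sumr.
over.
rewrite exchange_big /=; apply: eq_bigr => j _; have := ltn_ord j => ltj.
pose g s := X (lx + j%:Z) *m Y s *m Z (p - lx - j%:Z - s).
transitivity (\sum_(i < M) g (ly - j%:Z + i%:Z)).
  by apply: eq_bigr => i _; rewrite /g; congr (_ *m Y _ *m Z _); lia.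
transitivity (\sum_(i < M) g (ly + i%:Z)); last first.
  by apply: eq_bigr => i _; rewrite /g mulmxA; congr (_ *m Y _ *m Z _); lia.
apply: sum_window_eq => s /orP[lt_s|ge_s]; rewrite /g.
- by rewrite Y0 ?mulmx0 ?mul0mx //; lia.
- by rewrite Z0 ?mulmx0 //; lia.
- by rewrite Y0 ?mulmx0 ?mul0mx.
- by rewrite Z0 ?mulmx0 //; lia.
Qed.

Lemma bounded_below_oneL : bounded_below (oneL R N).
Proof. by exists 0 => p; rewrite /oneL; case: eqP => // ->. Qed.

Lemma oneL_neq0 p : p != 0 -> oneL R N p = 0.
Proof. by rewrite /oneL => /negbTE ->. Qed.

Lemma mulL1 X : bounded_below X -> mulL X (oneL R N) = X.
Proof.
move=> bX; apply/funext => p.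
rewrite (@mulL_window _ _ p p 1 bX bounded_below_oneL) => [|s ne_s]; last first.
  by rewrite oneL_neq0 ?mulmx0 //; apply/eqP; lia.
by rewrite big_ord1 addr0 subrr /oneL eqxx mulmx1.
Qed.

Lemma mul1L X : bounded_below X -> mulL (oneL R N) X = X.
Proof.
move=> bX; apply/funext => p.
rewrite (@mulL_window _ _ p 0 1 bounded_below_oneL bX) => [|s ne_s]; last first.
  by rewrite oneL_neq0 ?mul0mx //; apply/eqP; lia.
by rewrite big_ord1 addr0 subr0 /oneL eqxx mul1mx.
Qed.

Lemma bounded_below_subL X Y :
  bounded_below X -> bounded_below Y -> bounded_below (subL X Y).
Proof.
move=> bX bY; exists (Num.min (lo X) (lo Y)) => p; rewrite lt_min => /andP[ltX ltY].
by rewrite /subL (bounded_below_lo bX) ?(bounded_below_lo bY) ?subrr.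
Qed.

Lemma mulLBl X Y Z :
  bounded_below X -> bounded_below Y -> bounded_below Z ->
  mulL (subL X Y) Z = subL (mulL X Z) (mulL Y Z).
Proof.
move=> bX bY bZ; apply/funext => p.
have [X0 Y0 Z0] := And3 (bounded_below_lo bX) (bounded_below_lo bY) (bounded_below_lo bZ).
pose l := Num.min (lo X) (lo Y).
have [lX lY] : l <= lo X /\ l <= lo Y by rewrite !ge_min !lexx orbT.
clearbody l; set M := (absz (p - l - lo Z)%R + 1)%N.
have win W : (forall s, s < l -> W s = 0) -> bounded_below W ->
    mulL W Z p = \sum_(i < M) W (l + i%:Z) *m Z (p - (l + i%:Z)).
  move=> W0 bW; apply: mulL_window => // s /orP[lt_s|ge_s]; first by rewrite W0 ?mul0mx.
  by rewrite Z0 ?mulmx0 //; rewrite /M in ge_s; lia.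
have X0' s : s < l -> X s = 0 by move=> lt_s; apply: X0; lia.
have Y0' s : s < l -> Y s = 0 by move=> lt_s; apply: Y0; lia.
rewrite win; last 2 first.
- by move=> s lt_s; rewrite /subL X0' ?Y0' ?subrr.
- exact: bounded_below_subL.
by rewrite /subL !win // -sumrB; apply: eq_bigr => i _; rewrite mulmxBl.
Qed.

Lemma mulL_deg01l W Y p :
  bounded_below Y -> (forall s, s != 0 -> s != 1 -> W s = 0) ->
  mulL W Y p = W 0 *m Y p + W 1 *m Y (p - 1).
Proof.
move=> bY W0.
have bW : bounded_below W by exists 0 => s lt_s; apply: W0; apply/eqP; lia.
rewrite (@mulL_window W Y p 0 2 bW bY) => [|s ne_s]; last first.
  by rewrite W0 ?mul0mx //; apply/eqP; lia.
by rewrite !big_ord_recl big_ord0 /= subr0 !addr0 add0r.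
Qed.

Lemma mulL_deg01r W Y p :
  bounded_below Y -> (forall s, s != 0 -> s != 1 -> W s = 0) ->
  mulL Y W p = Y p *m W 0 + Y (p - 1) *m W 1.
Proof.
move=> bY W0.
have bW : bounded_below W by exists 0 => s lt_s; apply: W0; apply/eqP; lia.
rewrite (@mulL_window Y W p (p - 1) 2 bY bW) => [|s ne_s]; last first.
  by rewrite W0 ?mulmx0 //; apply/eqP; lia.
rewrite !big_ord_recl big_ord0 /= !addr0 addrC.
rewrite (_ : p - 1 + _ = p) ?subrr; last by rewrite /bump /=; lia.
by rewrite opprB addrCA subrr addr0.
Qed.

Lemma mulL_coef0 X Y :
  bounded_below X -> bounded_below Y ->
  (forall s, 1 <= s -> X s = 0) -> (forall s, 1 <= s -> Y s = 0) ->
  mulL X Y 0 = X 0 *m Y 0.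
Proof.
move=> bX bY X0 Y0.
rewrite (@mulL_window X Y 0 0 1 bX bY) => [|s /orP[lt_s|ge_s]]; last first.
- by rewrite X0 ?mul0mx.
- by rewrite Y0 ?mulmx0 //; lia.
by rewrite big_ord1 !addr0.
Qed.

Lemma bounded_below_pim X : bounded_below X -> bounded_below (pim X).
Proof. by case=> l X0; exists l => p lt_p; rewrite /pim X0 ?if_same. Qed.

Lemma pim_nonneg X p : 0 <= p -> pim X p = 0.
Proof. by rewrite /pim ltNge => ->. Qed.

Lemma mulL_commL_inv F P Y L :
  bounded_below F -> bounded_below P -> bounded_below Y -> bounded_below L ->
  mulL P F = oneL R N ->
  mulL (commL (mulL F Y) (mulL L P)) F =
  subL (mulL (mulL F Y) L) (mulL L (mulL Y F)).
Proof.
move=> bF bP bY bL PF1.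
have [bFY bLP] := (bounded_below_mulL F Y, bounded_below_mulL L P).
have LPF : mulL (mulL L P) F = L by rewrite (mulLA bL bP bF) PF1 (mulL1 bL).
rewrite /commL (mulLBl (bounded_below_mulL _ _) (bounded_below_mulL _ _) bF).
rewrite (mulLA bFY bLP bF) LPF (mulLA bLP bFY bF) (mulLA bF bY bF).
by rewrite -(mulLA bLP bF (bounded_below_mulL _ _)) LPF.
Qed.

Lemma dvdz_modn_sub (n x : nat) : (n%:Z %| (x %% n)%N%:Z - x%:Z)%Z.
Proof. by apply/dvdzP; exists (- (x %/ n)%N%:Z); have := divn_eq x n; lia. Qed.

Lemma twisted_mulL X Y : twisted X -> twisted Y -> twisted (mulL X Y).
Proof.
move=> tX tY p i j; apply: contraNT => ndvd; apply/eqP.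
rewrite /mulL; case: ifP => _; last by rewrite mxE.
rewrite summxE big1 // => w _; rewrite mxE big1 // => k _.
have [->|Xik] := eqVneq (X (lo X + w%:Z) i k) 0; first by rewrite mul0r.
have [->|Ykj] := eqVneq (Y (p - lo X - w%:Z) k j) 0; first by rewrite mulr0.
case/negP: ndvd.
rewrite (_ : _ - p = (i%:Z - k%:Z - (lo X + w%:Z)) + (k%:Z - j%:Z - (p - lo X - w%:Z))).
  by apply: rpredD; [apply: tX | apply: tY].
by lia.
Qed.

Lemma twisted_addL X Y : twisted X -> twisted Y -> twisted (addL X Y).
Proof.
move=> tX tY p i j; rewrite mxE.
by have [->|/tX] := eqVneq (X p i j) 0; [rewrite add0r; apply: tY|].
Qed.

Lemma twisted_subL X Y : twisted X -> twisted Y -> twisted (subL X Y).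
Proof.
move=> tX tY p i j; rewrite !mxE.
by have [->|/tX] := eqVneq (X p i j) 0; [rewrite sub0r oppr_eq0; apply: tY|].
Qed.

Lemma twisted_scaleL c X : twisted X -> twisted (scaleL c X).
Proof.
move=> tX p i j; rewrite mxE.
by have [->|/tX] := eqVneq (X p i j) 0; [rewrite mulr0 eqxx|].
Qed.

Lemma twisted_oneL : twisted (oneL R N).
Proof.
move=> p i j; rewrite /oneL; case: (p =P 0) => [->|_]; last by rewrite mxE eqxx.
by rewrite mxE; case: (i =P j) => [->|_]; rewrite ?eqxx // subrr subr0 dvdz0.
Qed.

Lemma shiftM_neq0 (i j : 'I_N) : shiftM R N i j != 0 -> (N%:Z %| i%:Z - j%:Z - 1)%Z.
Proof.
rewrite mxE; case: ((i : nat) =P (j.+1 %% N)%N) => [ij _|]; last by rewrite eqxx.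
by rewrite (_ : _ - 1 = (j.+1 %% N)%N%:Z - j.+1%:Z) ?dvdz_modn_sub //; lia.
Qed.

Lemma shiftM_conj_diag (Z : 'M[R[i]]_N) (k k' : 'I_N) :
  k' = (k.+1 %% N)%N :> nat -> (Z *m shiftM R N) k k = (shiftM R N *m Z) k' k'.
Proof.
move=> kk'; rewrite !mxE (bigD1 k') //= [RHS](bigD1 k) //= !mxE kk' !eqxx mulr1 mul1r.
have succ_inj (x y : 'I_N) : (x.+1 %% N == y.+1 %% N)%N = (x == y).
  by rewrite -[x.+1]addn1 -[y.+1]addn1 eqn_modDr !modn_small.
congr (_ + _); rewrite big1 => [|j ne_j]; last first.
  by rewrite mxE -kk' val_eqE (negbTE ne_j) mulr0.
rewrite big1 // => j ne_j.
by rewrite mxE kk' succ_inj eq_sym (negbTE ne_j) mul0r.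
Qed.

Lemma twisted_calE : twisted (calE R N).
Proof.
move=> p i j; rewrite /calE; case: (p =P 1) => [->|_]; last by rewrite mxE eqxx.
exact: shiftM_neq0.
Qed.

Lemma inG_mulL X Y : inG X -> inG Y -> inG (mulL X Y).
Proof. by case=> tX _ [tY _]; split; [apply: twisted_mulL|]. Qed.

Lemma covariant_mulL_swap (f : loop R N -> loop R N) F P X :
  (forall X, inG X -> inG (f X)) ->
  (forall g gi X, inG g -> inG gi ->
     mulL g gi = oneL R N -> mulL gi g = oneL R N -> inG X ->
     f (mulL (mulL g X) gi) = mulL (mulL g (f X)) gi) ->
  inG F -> inG P -> mulL F P = oneL R N -> mulL P F = oneL R N -> inG X ->
  mulL (f (mulL P X)) P = mulL P (f (mulL X P)).
Proof.
move=> fG fcov iF iP FP1 PF1 iX.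
have [[_ bF] [_ bP] [_ bX]] := And3 iF iP iX.
have bfXP : bounded_below (f (mulL X P)) by case: (fG _ (inG_mulL iX iP)).
have PX : mulL P X = mulL (mulL P (mulL X P)) F.
  by rewrite !mulLA // PF1 mulL1.
by rewrite PX fcov ?inG_mulL //; [rewrite !mulLA // FP1 mulL1 | apply: inG_mulL].
Qed.

End LoopAlgebra.

Section ComplexCurves.

Variable R : realType.
Implicit Types (u v : R -> R[i]) (c : R[i]) (t : R).

Definition cderivable u t :=
  derivable (fun s => reC (u s)) t 1 /\ derivable (fun s => imC (u s)) t 1.

Lemma smoothC_cderivable u t : smoothC u -> cderivable u t.
Proof. by case=> re im; split; [exact: (re 0%N) | exact: (im 0%N)]. Qed.

Lemma cderivable_cst c t : cderivable (fun _ => c) t.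
Proof. by split; apply: derivable_cst. Qed.

Lemma cderiv_cst c t : cderiv (fun _ => c) t = 0.
Proof. by rewrite /cderiv !derive1E !derive_cst. Qed.

Lemma reC_add (x y : R[i]) : reC (x + y) = reC x + reC y.
Proof. by case: x; case: y. Qed.

Lemma imC_add (x y : R[i]) : imC (x + y) = imC x + imC y.
Proof. by case: x; case: y. Qed.

Lemma reC_mul (x y : R[i]) : reC (x * y) = reC x * reC y - imC x * imC y.
Proof. by case: x; case: y. Qed.

Lemma imC_mul (x y : R[i]) : imC (x * y) = reC x * imC y + imC x * reC y.
Proof. by case: x => ? ?; case: y. Qed.

Lemma reC_addf u v :
  (fun s => reC (u s + v s)) = (fun s => reC (u s)) + (fun s => reC (v s)).
Proof. by apply/funext => s; rewrite reC_add. Qed.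

Lemma imC_addf u v :
  (fun s => imC (u s + v s)) = (fun s => imC (u s)) + (fun s => imC (v s)).
Proof. by apply/funext => s; rewrite imC_add. Qed.

Lemma reC_mull c u :
  (fun s => reC (c * u s)) = reC c \*: (fun s => reC (u s)) - imC c \*: (fun s => imC (u s)).
Proof. by apply/funext => s; rewrite reC_mul. Qed.

Lemma imC_mull c u :
  (fun s => imC (c * u s)) = reC c \*: (fun s => imC (u s)) + imC c \*: (fun s => reC (u s)).
Proof. by apply/funext => s; rewrite imC_mul. Qed.

Lemma cderivableD u v t :
  cderivable u t -> cderivable v t -> cderivable (fun s => u s + v s) t.
Proof.
case=> u1 u2 [v1 v2]; rewrite /cderivable reC_addf imC_addf.
by split; [exact: (derivableD u1 v1) | exact: (derivableD u2 v2)].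
Qed.

Lemma cderivD u v t : cderivable u t -> cderivable v t ->
  cderiv (fun s => u s + v s) t = cderiv u t + cderiv v t.
Proof.
case=> u1 u2 [v1 v2]; rewrite /cderiv reC_addf imC_addf.
by rewrite !derive1E (deriveD u1 v1) (deriveD u2 v2).
Qed.

Lemma cderivableMl c u t : cderivable u t -> cderivable (fun s => c * u s) t.
Proof.
case=> u1 u2; rewrite /cderivable reC_mull imC_mull; split.
  exact: (derivableB (derivableZ u1) (derivableZ u2)).
exact: (derivableD (derivableZ u2) (derivableZ u1)).
Qed.

Lemma cderivMl c u t : cderivable u t -> cderiv (fun s => c * u s) t = c * cderiv u t.
Proof.
case=> u1 u2; rewrite /cderiv reC_mull imC_mull !derive1E.
rewrite (deriveB (derivableZ u1) (derivableZ u2)).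
rewrite (deriveD (derivableZ u2) (derivableZ u1)) !(deriveZ _ u1) !(deriveZ _ u2).
move: ('D_1 (fun s => reC (u s)) t) ('D_1 (fun s => imC (u s)) t) => x y.
case: c => c1 c2 /=.
have -> : ((c1 +i* c2) * (x +i* y) = (c1 * x - c2 * y) +i* (c1 * y + c2 * x))%C by [].
by congr Complex.
Qed.

Lemma cderivableMr c u t : cderivable u t -> cderivable (fun s => u s * c) t.
Proof. by under eq_fun => s do rewrite mulrC; apply: cderivableMl. Qed.

Lemma cderivMr c u t : cderivable u t -> cderiv (fun s => u s * c) t = cderiv u t * c.
Proof. by under eq_fun => s do rewrite mulrC; rewrite mulrC; apply: cderivMl. Qed.

Lemma cderivable_sum n (u : 'I_n -> R -> R[i]) t :
  (forall i, cderivable (u i) t) -> cderivable (fun s => \sum_(i < n) u i s) t.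
Proof.
elim: n u => [|n IH] u du.
  by under eq_fun => s do rewrite big_ord0; apply: cderivable_cst.
under eq_fun => s do rewrite big_ord_recr /=.
by apply: cderivableD => //; apply: IH.
Qed.

Lemma cderiv_sum n (u : 'I_n -> R -> R[i]) t :
  (forall i, cderivable (u i) t) ->
  cderiv (fun s => \sum_(i < n) u i s) t = \sum_(i < n) cderiv (u i) t.
Proof.
elim: n u => [|n IH] u du.
  by under eq_fun => s do rewrite big_ord0; rewrite cderiv_cst big_ord0.
under eq_fun => s do rewrite big_ord_recr /=.
by rewrite cderivD ?IH ?big_ord_recr //; apply: cderivable_sum.
Qed.

End ComplexCurves.

Section LoopDerivative.

Variables (R : realType) (N : nat).

Lemma dotL_eq0 (X : R -> loop R N) t q : (forall s, X s q = 0) -> dotL X t q = 0.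
Proof.
move=> X0; apply/matrixP => i j; rewrite !mxE.
by under eq_fun => s do rewrite X0 mxE; apply: cderiv_cst.
Qed.

Lemma dotL_mulLr (X : R -> loop R N) (P : loop R N) (l : int) (M : nat) t :
  bounded_below P ->
  (forall s q, (q < l) || (l + M%:Z <= q) -> X s q = 0) ->
  (forall q (i j : 'I_N), cderivable (fun s => X s q i j) t) ->
  dotL (fun s => mulL (X s) P) t = mulL (dotL X t) P.
Proof.
move=> bP X0 dX.
have win (Z : loop R N) : (forall q, (q < l) || (l + M%:Z <= q) -> Z q = 0) -> forall p,
    mulL Z P p = \sum_(w < M) Z (l + w%:Z) *m P (p - (l + w%:Z)).
  move=> Z0 p; apply: mulL_window => // [|s /Z0->]; last by rewrite mul0mx.
  by exists l => q lt_q; rewrite Z0 ?lt_q.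
apply/funext => p; apply/matrixP => i j; rewrite mxE.
have -> : (fun s => mulL (X s) P p i j) = (fun s => \sum_(w < M) \sum_(k < N)
    X s (l + w%:Z) i k * P (p - (l + w%:Z)) k j).
  apply/funext => s; rewrite (win _ (X0 s)) summxE.
  by apply: eq_bigr => w _; rewrite mxE.
rewrite win => [|q out_q]; last by apply: dotL_eq0 => s; apply: X0.
rewrite summxE cderiv_sum => [|w]; last first.
  by apply: cderivable_sum => k; apply: cderivableMr.
apply: eq_bigr => w _; rewrite mxE cderiv_sum => [|k]; last exact: cderivableMr.
by apply: eq_bigr => k _; rewrite cderivMr // mxE.
Qed.

End LoopDerivative.

Section DressingFactor.

Variables (R : realType) (N : nat) (alpha : R).

Local Notation F := (Fminus N alpha).
Local Notation alphaC := (alpha%:C)%C.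

Lemma Fminus_out s : s != 0 -> s != 1 -> F s = 0.
Proof.
rewrite /Fminus /addL /scaleL /oneL /calE => /negbTE-> /negbTE->.
by rewrite scaler0 addr0.
Qed.

Lemma Fminus0 : F 0 = 1%:M.
Proof. by rewrite /Fminus /addL /scaleL /oneL /calE /= scaler0 addr0. Qed.

Lemma Fminus1 : F 1 = alphaC *: shiftM R N.
Proof. by rewrite /Fminus /addL /scaleL /oneL /calE /= add0r. Qed.

Lemma inG_Fminus : inG F.
Proof.
split; last by exists 0 => s lt_s; apply: Fminus_out; apply/eqP; lia.
by apply: twisted_addL; [exact: twisted_oneL | apply/twisted_scaleL/twisted_calE].
Qed.

Lemma mulL_Fminusl Y p :
  bounded_below Y -> mulL F Y p = Y p + alphaC *: (shiftM R N *m Y (p - 1)).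
Proof.
move=> bY; rewrite mulL_deg01l // ?Fminus0 ?Fminus1 ?mul1mx -?scalemxAl //.
exact: Fminus_out.
Qed.

Lemma mulL_Fminusr Y p :
  bounded_below Y -> mulL Y F p = Y p + alphaC *: (Y (p - 1) *m shiftM R N).
Proof.
move=> bY; rewrite mulL_deg01r // ?Fminus0 ?Fminus1 ?mulmx1 -?scalemxAr //.
exact: Fminus_out.
Qed.

Lemma P0_mulL_pim_Fminus X (k k' : 'I_N) :
  bounded_below X -> k' = (k.+1 %% N)%N :> nat ->
  P0 (mulL (pim X) F) k k = P0 (mulL F (pim X)) k' k'.
Proof.
move=> bX kk'; have bY := bounded_below_pim bX.
rewrite /P0 mulL_Fminusl // mulL_Fminusr // pim_nonneg // !add0r.
by rewrite [LHS]mxE [RHS]mxE (shiftM_conj_diag _ kk').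
Qed.

End DressingFactor.

Section LaxMatrix.

Variables (R : realType) (N m : nat) (alpha : R).
Variables (b : 'I_N -> R -> R[i]) (a : nat -> 'I_N -> R -> R[i]).
Hypothesis smooth_b : forall k, smoothC (b k).
Hypothesis smooth_a : forall j k, (1 <= j <= m)%N -> smoothC (a j k).

Local Notation F := (Fminus N alpha).
Local Notation alphaC := (alpha%:C)%C.

Definition calL s := subL F (scaleL alphaC (Tcurve m b a s)).

Lemma twisted_Tcurve s : twisted (Tcurve m b a s).
Proof.
move=> p i j; rewrite /Tcurve; case: (p =P 1) => [->|_]; first exact: shiftM_neq0.
case: (p =P 0) => [->|_].
  by rewrite mxE; case: (i =P j) => [->|]; rewrite ?eqxx // subrr subr0 dvdz0.
case: ifP => [/andP[_ lt_p]|_]; last by rewrite mxE eqxx.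
rewrite mxE; case: ((j : nat) =P ((i + absz p) %% N)%N) => [ji _|]; last by rewrite eqxx.
rewrite (_ : _ - p = - ((j : nat)%:Z - (i + absz p)%N%:Z)); last by lia.
by rewrite rpredN ji dvdz_modn_sub.
Qed.

Lemma calL_below s q : q < - m%:Z -> calL s q = 0.
Proof.
move=> lt_q; rewrite /calL /subL /scaleL Fminus_out; try by apply/eqP; lia.
have notneg : (- m%:Z <= q < 0) = false by apply/negbTE; lia.
rewrite /Tcurve ifN_eq ?ifN_eq ?notneg ?scaler0 ?subrr //; apply/eqP; lia.
Qed.

Lemma inG_calL s : inG (calL s).
Proof.
split; last by exists (- m%:Z); apply: calL_below.
by apply: twisted_subL; [case: (inG_Fminus N alpha) | apply/twisted_scaleL/twisted_Tcurve].
Qed.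

Lemma calL_pos s q : 1 <= q -> calL s q = 0.
Proof.
move=> ge_q; rewrite /calL /subL /scaleL.
have [->|ne1] := eqVneq q 1; first by rewrite Fminus1 /Tcurve eqxx subrr.
have ne0 : q != 0 by apply/eqP; lia.
have notneg : (- m%:Z <= q < 0) = false by apply/negbTE; lia.
by rewrite Fminus_out // /Tcurve (negbTE ne1) (negbTE ne0) notneg scaler0 subrr.
Qed.

Lemma calL0 s : calL s 0 = diag_mx (\row_i (1 - alphaC * b i s)).
Proof.
apply/matrixP => i j; rewrite /calL /subL /scaleL Fminus0 /Tcurve /= !mxE.
by case: (i =P j) => [->|]; rewrite ?mulr0 ?subr0 ?eqxx.
Qed.

Lemma cderivable_Tcurve q (i j : 'I_N) t : cderivable (fun s => Tcurve m b a s q i j) t.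
Proof.
rewrite /Tcurve; case: (q =P 1) => _; first exact: cderivable_cst.
case: (q =P 0) => _.
  under eq_fun => s do rewrite mxE.
  by case: (i =P j) => _; [apply: smoothC_cderivable | apply: cderivable_cst].
case: (boolP (- m%:Z <= q < 0)) => [/andP[ge_q lt_q]|_]; last first.
  by under eq_fun => s do rewrite mxE; apply: cderivable_cst.
under eq_fun => s do rewrite mxE.
case: eqP => _; last exact: cderivable_cst.
by apply/smoothC_cderivable/smooth_a; lia.
Qed.

Lemma cderivable_calL q (i j : 'I_N) t : cderivable (fun s => calL s q i j) t.
Proof.
under eq_fun => s do rewrite !mxE -mulN1r mulrA.
by apply: cderivableD; [apply: cderivable_cst | apply/cderivableMl/cderivable_Tcurve].
Qed.

Lemma cderiv_calL0 (k : 'I_N) t :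
  cderiv (fun s => calL s 0 k k) t = - alphaC * cderiv (b k) t.
Proof.
have -> : (fun s => calL s 0 k k) = (fun s => 1 + - alphaC * b k s).
  by apply/funext => s; rewrite calL0 !mxE eqxx mulr1n mulNr.
have db := smoothC_cderivable t (smooth_b k).
by rewrite (cderivD (cderivable_cst _ _) (cderivableMl _ db)) cderiv_cst add0r cderivMl.
Qed.

Lemma calL_lax_diag0 (P X : loop R N) t (k : 'I_N) :
  1 - alphaC * b k t != 0 -> bounded_below P -> bounded_below X ->
  mulL P F = oneL R N ->
  dotL (fun s => mulL (calL s) P) t =
    commL (mulL F (pim X)) (mulL (calL t) P) ->
  P0 (mulL (pim X) F) k k =
    P0 (mulL F (pim X)) k k + alphaC * cderiv (b k) t / (1 - alphaC * b k t).
Proof.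
move=> nz bP bX PF1 lax; have bY := bounded_below_pim bX.
have [_ bF] := inG_Fminus N alpha.
have bL s : bounded_below (calL s) by case: (inG_calL s).
have A1pos s : 1 <= s -> mulL F (pim X) s = 0.
  by move=> ge_s; rewrite mulL_Fminusl // !pim_nonneg ?mulmx0 ?scaler0 ?addr0 //; lia.
have A2pos s : 1 <= s -> mulL (pim X) F s = 0.
  by move=> ge_s; rewrite mulL_Fminusr // !pim_nonneg ?mul0mx ?scaler0 ?addr0 //; lia.
(* Right multiplication by F turns the Lax equation for T1 = calL P into one for calL. *)
have dL : dotL calL t =
    subL (mulL (mulL F (pim X)) (calL t)) (mulL (calL t) (mulL (pim X) F)).
  rewrite -(mulL_commL_inv bF bP bY (bL t) PF1) -lax (@dotL_mulLr _ _ _ _ (- m%:Z) m.+1) //.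
  - have bdL : bounded_below (dotL calL t).
      by exists (- m%:Z) => q lt_q; apply: dotL_eq0 => s; apply: calL_below.
    by rewrite mulLA // PF1 mulL1.
  - move=> s q /orP[/calL_below //|ge_q]; apply: calL_pos; lia.
  - by move=> q i j; apply: cderivable_calL.
(* calL and both A's vanish in positive degree, so only degree-0 parts survive. *)
have := congr1 (fun Z : loop R N => Z 0 k k) dL.
rewrite /= /subL mxE (mulL_coef0 (bounded_below_mulL _ _) (bL t) A1pos (calL_pos t)).
rewrite (mulL_coef0 (bL t) (bounded_below_mulL _ _) (calL_pos t) A2pos).
rewrite calL0 mul_mx_diag mul_diag_mx !mxE cderiv_calL0 /P0.
move: (mulL F (pim X) 0 k k) (mulL (pim X) F 0 k k) (cderiv (b k) t) => x y z eq0.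
have -> : alphaC * z = (y - x) * (1 - alphaC * b k t).
  by rewrite -[LHS]opprK -mulNr eq0; ring.
by rewrite mulfK //; ring.
Qed.

End LaxMatrix.

Section CyclicTelescope.

Variable V : zmodType.

Lemma sum_ord_ltS (N : nat) (d : 'I_N -> V) n (lt_nN : (n < N)%N) :
  \sum_(j < N | (j < n.+1)%N) d j = \sum_(j < N | (j < n)%N) d j + d (Ordinal lt_nN).
Proof.
rewrite (bigD1 (Ordinal lt_nN)) //= addrC; congr (_ + _); apply: eq_bigl => j.
by rewrite ltnS ltn_neqAle -val_eqE /= andbC.
Qed.

Lemma cyclic_telescope (N : nat) (x y d : 'I_N -> V) :
  (forall k k' : 'I_N, k' = (k.+1 %% N)%N :> nat -> y k = x k') ->
  (forall k, y k = x k + d k) ->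
  exists C, forall k : 'I_N,
    x k = C + \sum_(j < N | (j < k)%N) d j /\ y k = C + \sum_(j < N | (j <= k)%N) d j.
Proof.
case: N x y d => [|n] x y d shift step; first by exists 0 => -[].
exists (x ord0).
have xk k (ltk : (k < n.+1)%N) :
    x (Ordinal ltk) = x ord0 + \sum_(j < n.+1 | (j < k)%N) d j.
  elim: k ltk => [|k IH] ltk.
    by rewrite big_pred0 ?addr0 //; congr x; apply: val_inj.
  have ltk' := ltnW ltk.
  by rewrite -(shift (Ordinal ltk')) /= ?modn_small // step IH (sum_ord_ltS _ ltk') addrA.
move=> [k ltk]; rewrite step xk -addrA; split => //.
by under eq_bigl => j do rewrite -ltnS; rewrite (sum_ord_ltS _ ltk).
Qed.

End CyclicTelescope.

Theorem mainTheorem12 (R : realType) (N m : nat) (alpha : R)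
  (f : loop R N -> loop R N)
  (b : 'I_N -> R -> R[i]) (a : nat -> 'I_N -> R -> R[i])
  (Finv : loop R N) :
  (2 <= N)%N -> (1 <= m)%N -> alpha != 0 ->
  (forall X, inG X -> inG (f X)) ->
  (forall g gi X, inG g -> inG gi ->
     mulL g gi = oneL R N -> mulL gi g = oneL R N -> inG X ->
     f (mulL (mulL g X) gi) = mulL (mulL g (f X)) gi) ->
  (forall k, smoothC (b k)) ->
  (forall j k, (1 <= j <= m)%N -> smoothC (a j k)) ->
  (forall k t, 1 - (alpha%:C)%C * b k t != 0) ->
  inG Finv -> mulL (Fminus N alpha) Finv = oneL R N ->
  mulL Finv (Fminus N alpha) = oneL R N ->
  let L := fun t => subL (Fminus N alpha)
                         (scaleL (alpha%:C)%C (Tcurve m b a t)) in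
  let T1 := fun t => mulL (L t) Finv in
  let T2 := fun t => mulL Finv (L t) in
  let A1 := fun t => mulL (Fminus N alpha) (pim (mulL Finv (f (T1 t)))) in
  let A2 := fun t => mulL (pim (mulL (f (T2 t)) Finv)) (Fminus N alpha) in
  (forall t, dotL T1 t = commL (A1 t) (T1 t)) ->
  forall t : R,
    (forall k k' : 'I_N, (k' : nat) = (k.+1 %% N)%N ->
        P0 (A2 t) k k = P0 (A1 t) k' k') /\
    exists C : R[i], forall k : 'I_N,
      P0 (A1 t) k k = C + \sum_(j < N | (j < k)%N)
          (alpha%:C)%C * cderiv (b j) t / (1 - (alpha%:C)%C * b j t) /\
      P0 (A2 t) k k = C + \sum_(j < N | (j <= k)%N)
          (alpha%:C)%C * cderiv (b j) t / (1 - (alpha%:C)%C * b j t).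
Proof.
move=> _ _ _ fG fcov smooth_b smooth_a nz iP FP1 PF1 L T1 T2 A1 A2 lax t.
have [_ bP] := iP.
have A2E : A2 t = mulL (pim (mulL Finv (f (T1 t)))) (Fminus N alpha).
  have iL := inG_calL m alpha b a t.
  by rewrite /A2 (covariant_mulL_swap fG fcov (inG_Fminus N alpha) iP FP1 PF1 iL).
have shift (k k' : 'I_N) : k' = (k.+1 %% N)%N :> nat -> P0 (A2 t) k k = P0 (A1 t) k' k'.
  by move=> kk'; rewrite A2E (P0_mulL_pim_Fminus _ (bounded_below_mulL _ _) kk').
split => //; apply: cyclic_telescope => // k; rewrite A2E.
exact: (calL_lax_diag0 smooth_b smooth_a (nz k t) bP (bounded_below_mulL _ _) PF1 (lax t)).
Qed.
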